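(* Let $0<q<1$, $m\in\{0,1,2,\dots\}$ and $0<\lambda<q^m(1-q)^{-1}$. Let $X\sim\mathscr{P}(\lambda;q,m)$ (defined in the context) and consider the random variable $[X]_q=\frac{1-q^X}{1-q}$ (the $q$-deformed number operator $[N]_q$ measured in the generalized coherent state). Then \[ \langle [N]_q\rangle:=\sum_{j\ge0}[j]_q\,p_j(\lambda;q,m)=\lambda+[m]_q, \] \[ \langle([N]_q-\langle[N]_q\rangle)^2\rangle:=\sum_{j\ge0}\big([j]_q-\langle[N]_q\rangle\big)^2p_j(\lambda;q,m)=\lambda^2q^m(1+q-2q^{-m})+\lambda q^m\big(2[m]_q+q^m\big). \]
   Context: The $q$-number is $[a]_q=(1-q^a)/(1-q)$. For $a\in\mathbb{C}$: $(a;q)_0=1$, $(a;q)_n=\prod_{k=0}^{n-1}(1-aq^k)$, $(a;q)_\infty=\prod_{k\ge0}(1-aq^k)$. The Wall polynomial is $P_n(x;a|q)=\sum_{k=0}^n\frac{(q^{-n};q)_k}{(aq;q)_k}\frac{(qx)^k}{(q;q)_k}$. Write $m\wedge j=\min(m,j)$, $m\vee j=\max(m,j)$, $\binom{n}{2}=n(n-1)/2$. For $0<\lambda<q^m/(1-q)$ set $\mathcal{N}_{q,m}(\lambda)=\frac{(q^{1-m}(1-q)\lambda;q)_m}{q^m\,(q^{-m}(1-q)\lambda;q)_\infty}$ and \[ p_j(\lambda;q,m)=\frac{q^{2\binom{m\wedge j}{2}}(1-q)^{|m-j|}\lambda^{|m-j|}}{\mathcal{N}_{q,m}(\lambda)\,q^{mj}(q;q)_j(q;q)_m}\left(\frac{(q;q)_{m\vee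 j}}{(q;q)_{|m-j|}}P_{m\wedge j}\big((1-q)\lambda;q^{|m-j|}\,|\,q\big)\right)^2,\quad j=0,1,2,\dots, \] the probability mass function of the generalized Euler distribution $\mathscr{P}(\lambda;q,m)$ (with $\lambda=z\bar z$). *)

From Stdlib Require Import Reals Lra Lia.
From Coquelicot Require Import Coquelicot.
Open Scope R_scope.

Definition qnum (q : R) (a : nat) : R := (1 - q ^ a) / (1 - q).

Fixpoint qpoch (a q : R) (n : nat) : R :=
  match n with
  | O => 1
  | S n' => qpoch a q n' * (1 - a * q ^ n')
  end.

Definition qpoch_inf (a q : R) : R := real (Lim_seq (fun n => qpoch a q n)).

Definition binom2 (n : nat) : nat := Nat.div (n * (n - 1)) 2.

Definition absdiff (m j : nat) : nat := (Nat.max m j - Nat.min m j)%nat.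

Definition wall (n : nat) (x a q : R) : R :=
  sum_f_R0 (fun k => qpoch (/ q ^ n) q k / qpoch (a * q) q k
                     * (q * x) ^ k / qpoch q q k) n.

Definition Nqm (q : R) (m : nat) (lam : R) : R :=
  qpoch (q / q ^ m * (1 - q) * lam) q m
  / (q ^ m * qpoch_inf (/ q ^ m * (1 - q) * lam) q).

Definition pj (lam q : R) (m j : nat) : R :=
  let d := absdiff m j in
  let mn := Nat.min m j in
  let mx := Nat.max m j in
  q ^ (2 * binom2 mn) * (1 - q) ^ d * lam ^ d
  / (Nqm q m lam * q ^ (m * j) * qpoch q q j * qpoch q q m)
  * (qpoch q q mx / qpoch q q d * wall mn ((1 - q) * lam) (q ^ d) q) ^ 2.

(* With x = (1-q)λ and s = x/q^m, p_j is proportional to s^j Φ(q^j)^2 / (q;q)_j, where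
   Φ(y) = Σ_k β_k (y q^(k+1-m); q)_(m-k) is a polynomial of degree m in y whose value at
   y = q^j is, up to an explicit factor, the Wall-polynomial bracket of p_j both for j >= m
   and for j < m.  Writing one factor as Φ(q^j) = Σ_i c_i q^(ij), the weighted sums
   Σ_j q^(pj) p_j become finite combinations of the series
   Σ_j Φ(q^j) t^j / (q;q)_j = Γ(t) e_q(t) at t = s q^(p+i), where e_q is Euler's
   q-exponential and Γ(t) = t^m (qx/(q^m t); q)_m.  Since Γ vanishes at t = s q^n for
   1 <= n <= m, only i = 0 (p = 0), i = m (p = 1) and i = m-1, m (p = 2) survive, and
   e_q(qt) = (1-t) e_q(t) evaluates them: Σ_j p_j = 1, E q^X = q^m - x and
   E q^(2X) = ((1-xq)[m+1]_q - (1-x)[m]_q)(q^m - x).  As [X]_q is affine in q^X, the two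
   moments follow. *)

From Stdlib Require Import Reals Lra Lia.
From Coquelicot Require Import Coquelicot.
Open Scope R_scope.

Lemma pow_le_1 q n : 0 <= q <= 1 -> q ^ n <= 1.
Proof.
  intros Hq. induction n as [|n IH]; simpl; [lra|].
  assert (0 <= q ^ n) by (apply pow_le; lra). nra.
Qed.

Lemma pow_div a b k : b <> 0 -> (a / b) ^ k = a ^ k / b ^ k.
Proof.
  intros Hb. unfold Rdiv. rewrite Rpow_mult_distr, pow_inv. reflexivity.
Qed.

Lemma pow_neg1_cases d : (-1) ^ d = 1 \/ (-1) ^ d = -1.
Proof.
  induction d as [|d [IH | IH]]; simpl; [left; ring | right | left]; rewrite IH; ring.
Qed.

Lemma sum_f_R0_succ_l f n : sum_f_R0 f (S n) = f 0%nat + sum_f_R0 (fun i => f (S i)) n.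
Proof. rewrite (decomp_sum f (S n)) by lia. reflexivity. Qed.

Lemma sum_f_R0_first g n :
  (forall i, (0 < i <= n)%nat -> g i = 0) -> sum_f_R0 g n = g 0%nat.
Proof.
  intros H. destruct n as [|n]; [reflexivity|].
  rewrite sum_f_R0_succ_l, sum_eq_R0; [ring|]. intros i Hi. apply H; lia.
Qed.

Lemma sum_f_R0_last g n :
  (forall i, (i < n)%nat -> g i = 0) -> sum_f_R0 g n = g n.
Proof.
  intros H. destruct n as [|n]; [reflexivity|].
  simpl. rewrite sum_eq_R0; [ring|]. intros i Hi. apply H; lia.
Qed.

Lemma sum_f_R0_last_two g n : (0 < n)%nat ->
  (forall i, (i < n - 1)%nat -> g i = 0) -> sum_f_R0 g n = g (n - 1)%nat + g n.
Proof.
  intros Hn H. destruct n as [|n]; [lia|].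
  simpl. rewrite sum_f_R0_last by (intros i Hi; apply H; lia). rewrite Nat.sub_0_r. reflexivity.
Qed.

Lemma sum_f_R0_pad f n p :
  (forall i, (n < i)%nat -> f i = 0) -> sum_f_R0 f n = sum_f_R0 f (n + p).
Proof.
  intros H. induction p as [|p IH]; [rewrite Nat.add_0_r; reflexivity|].
  rewrite Nat.add_succ_r. simpl. rewrite <- IH, H by lia. ring.
Qed.

Lemma sum_f_R0_shift a d j :
  (forall k, (k < d)%nat -> a k = 0) ->
  sum_f_R0 a (d + j) = sum_f_R0 (fun k => a (d + k)%nat) j.
Proof.
  intros H. induction j as [|j IH].
  - rewrite Nat.add_0_r. destruct d as [|d]; [reflexivity|].
    simpl. rewrite sum_eq_R0, Nat.add_0_r; [ring|]. intros; apply H; lia.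
  - rewrite Nat.add_succ_r. simpl. rewrite IH, Nat.add_succ_r. reflexivity.
Qed.

Lemma sum_f_R0_swap (a : nat -> nat -> R) M N :
  sum_f_R0 (fun k => sum_f_R0 (fun i => a k i) N) M
  = sum_f_R0 (fun i => sum_f_R0 (fun k => a k i) M) N.
Proof.
  induction M as [|M IH]; simpl; [reflexivity|]. rewrite IH, <- plus_sum. reflexivity.
Qed.

(* Coquelicot states these over an arbitrary normed module, with [plus]/[scal] and equalities
   at that type; the instances at [R] keep goals within reach of [ring] and [field]. *)
Lemma is_series_Rext (a b : nat -> R) (l : R) :
  (forall n, a n = b n) -> is_series a l -> is_series b l.
Proof. exact (is_series_ext a b l). Qed.

Lemma is_series_Rcongr (a : nat -> R) (l l' : R) : l = l' -> is_series a l -> is_series a l'.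
Proof. intros <- H. exact H. Qed.

Lemma is_series_Rplus (a b : nat -> R) (la lb : R) :
  is_series a la -> is_series b lb -> is_series (fun n => a n + b n) (la + lb).
Proof. exact (is_series_plus a b la lb). Qed.

Lemma is_series_Rscal (a : nat -> R) (c la : R) :
  is_series a la -> is_series (fun n => c * a n) (c * la).
Proof. exact (is_series_scal_l c a la). Qed.

Lemma is_series_sum_f_R0 (a : nat -> nat -> R) (l : nat -> R) n :
  (forall k, (k <= n)%nat -> is_series (a k) (l k)) ->
  is_series (fun j => sum_f_R0 (fun k => a k j) n) (sum_f_R0 l n).
Proof.
  induction n as [|n IH]; intros H; simpl; [apply H; lia|].
  apply is_series_Rplus; [apply IH; intros k Hk|]; apply H; lia.
Qed.

Lemma is_series_quadratic (p y : nat -> R) (a0 a1 a2 c0 c1 c2 : R) :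
  is_series p a0 -> is_series (fun j => y j * p j) a1 -> is_series (fun j => y j ^ 2 * p j) a2 ->
  is_series (fun j => (c0 + c1 * y j + c2 * y j ^ 2) * p j) (c0 * a0 + c1 * a1 + c2 * a2).
Proof.
  intros H0 H1 H2.
  refine (is_series_Rext _ _ _ _ (is_series_Rplus _ _ _ _
            (is_series_Rplus _ _ _ _ (is_series_Rscal _ c0 _ H0) (is_series_Rscal _ c1 _ H1))
            (is_series_Rscal _ c2 _ H2))).
  intros j. ring.
Qed.

Lemma Series_nonneg (a : nat -> R) :
  (forall n, 0 <= a n) -> ex_series a -> 0 <= Series a.
Proof.
  intros Ha Hex. rewrite <- (Rmult_0_l (Series a)), <- Series_scal_l.
  apply Series_le; [|exact Hex]. intros n. rewrite Rmult_0_l. split; [lra | apply Ha].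
Qed.

Lemma qpoch_add a q n p : qpoch a q (n + p) = qpoch a q n * qpoch (a * q ^ n) q p.
Proof.
  induction p as [|p IH].
  - rewrite Nat.add_0_r; simpl; ring.
  - rewrite Nat.add_succ_r; simpl; rewrite IH, pow_add; ring.
Qed.

Lemma qpoch_succ_l a q n : qpoch a q (S n) = (1 - a) * qpoch (a * q) q n.
Proof.
  change (S n) with (1 + n)%nat. rewrite qpoch_add. simpl.
  rewrite !Rmult_1_r, Rmult_1_l. ring.
Qed.

Lemma qpoch_eq_0 a q n i : (i < n)%nat -> a * q ^ i = 1 -> qpoch a q n = 0.
Proof.
  intros Hi Ha. replace n with (S i + (n - S i))%nat by lia.
  rewrite qpoch_add. simpl. rewrite Ha. ring.
Qed.

Lemma qpoch_pos a q n : (forall i, (i < n)%nat -> a * q ^ i < 1) -> 0 < qpoch a q n.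
Proof.
  induction n as [|n IH]; intros H; simpl; [lra|].
  apply Rmult_lt_0_compat; [apply IH; intros; apply H; lia|].
  specialize (H n ltac:(lia)); lra.
Qed.

Lemma qpoch_qpow_pos q d k : 0 < q < 1 -> 0 < qpoch (q * q ^ d) q k.
Proof.
  intros Hq. apply qpoch_pos. intros i _.
  rewrite Rmult_assoc, <- pow_add, tech_pow_Rmult.
  apply pow_lt_1_compat; [lra | lia].
Qed.

Lemma qpoch_qq_pos q n : 0 < q < 1 -> 0 < qpoch q q n.
Proof.
  intros Hq. rewrite <- (Rmult_1_r q) at 1. exact (qpoch_qpow_pos q 0 n Hq).
Qed.

Lemma qpoch_qq_neq0 q n : 0 < q < 1 -> qpoch q q n <> 0.
Proof. intros Hq. apply Rgt_not_eq, qpoch_qq_pos, Hq. Qed.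

Lemma binom2_succ n : binom2 (S n) = (binom2 n + n)%nat.
Proof.
  unfold binom2. replace (S n * (S n - 1))%nat with (n * (n - 1) + n * 2)%nat.
  - apply Nat.div_add. lia.
  - destruct n; simpl; lia.
Qed.

Lemma binom2_double n : (2 * binom2 n + n = n * n)%nat.
Proof. induction n as [|n IH]; [reflexivity|]. rewrite binom2_succ. lia. Qed.

Lemma qpoch_inv_pow_reflect q j d : 0 < q < 1 ->
  qpoch (/ q ^ (j + d)) q d * q ^ d * q ^ binom2 (j + d) * qpoch q q j
  = (-1) ^ d * q ^ binom2 j * qpoch q q (j + d).
Proof.
  intros Hq. induction d as [|d IH].
  - rewrite Nat.add_0_r. simpl. ring.
  - rewrite qpoch_succ_l, Nat.add_succ_r.
    assert (0 < q ^ (j + d)) by (apply pow_lt; lra).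
    replace (/ q ^ S (j + d) * q) with (/ q ^ (j + d)) by (simpl; field; lra).
    rewrite binom2_succ, (pow_add q (binom2 (j + d)) (j + d)).
    change (qpoch q q (S (j + d))) with (qpoch q q (j + d) * (1 - q * q ^ (j + d))).
    simpl pow.
    transitivity ((qpoch (/ q ^ (j + d)) q d * q ^ d * q ^ binom2 (j + d) * qpoch q q j)
                  * (q ^ (j + d) * q - 1)); [field; lra|].
    rewrite IH. ring.
Qed.

Lemma qpoch_inv_pow q m : 0 < q < 1 ->
  qpoch (/ q ^ m) q m = (-1) ^ m * qpoch q q m / (q ^ m * q ^ binom2 m).
Proof.
  intros Hq. assert (H := qpoch_inv_pow_reflect q 0 m Hq). simpl in H.
  assert (q ^ m <> 0) by (apply pow_nonzero; lra).
  assert (q ^ binom2 m <> 0) by (apply pow_nonzero; lra).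
  apply (Rmult_eq_reg_r (q ^ m * q ^ binom2 m)); [|apply Rmult_integral_contrapositive; auto].
  transitivity (qpoch (/ q ^ m) q m * q ^ m * q ^ binom2 m * 1); [ring|].
  rewrite H. field. auto.
Qed.

Lemma qpoch_inv_pow_succ q m : 0 < q < 1 ->
  q ^ m * qpoch (/ q ^ S m) q m = qnum q (S m) * qpoch (/ q ^ m) q m.
Proof.
  intros Hq. assert (HS := qpoch_inv_pow q (S m) Hq). rewrite qpoch_inv_pow by exact Hq.
  change (qpoch (/ q ^ S m) q (S m)) with (qpoch (/ q ^ S m) q m * (1 - / q ^ S m * q ^ m)) in HS.
  replace (/ q ^ S m * q ^ m) with (/ q) in HS by (simpl; field; split; [apply pow_nonzero|]; lra).
  assert (q ^ m <> 0) by (apply pow_nonzero; lra).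
  assert (q ^ binom2 m <> 0) by (apply pow_nonzero; lra).
  assert (Hinv : 1 - / q <> 0).
  { assert (1 < / q) by (rewrite <- Rinv_1; apply Rinv_lt_contravar; lra). lra. }
  replace (qpoch (/ q ^ S m) q m)
    with ((-1) ^ S m * qpoch q q (S m) / (q ^ S m * q ^ binom2 (S m)) / (1 - / q))
    by (rewrite <- HS; field; split; auto; lra).
  unfold qnum. rewrite binom2_succ, pow_add. simpl. field. repeat split; auto; lra.
Qed.

Definition euler q t := Series (fun j => t ^ j / qpoch q q j).

Lemma ex_series_euler q t : 0 < q < 1 -> 0 < t < 1 ->
  ex_series (fun j => t ^ j / qpoch q q j).
Proof.
  intros Hq Ht. apply ex_series_Rabs, (ex_series_DAlembert _ t); [lra| |].
  - intros n. apply Rgt_not_eq, Rdiv_lt_0_compat; [apply pow_lt; lra | apply qpoch_qq_pos, Hq].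
  - apply is_lim_seq_ext with (fun n => t / (1 - q * q ^ n)).
    + intros n. simpl.
      assert (0 < qpoch q q n) by (apply qpoch_qq_pos, Hq).
      assert (0 < q ^ n) by (apply pow_lt; lra).
      assert (q * q ^ n < 1) by (rewrite tech_pow_Rmult; apply pow_lt_1_compat; lra || lia).
      assert (0 < t ^ n) by (apply pow_lt; lra).
      rewrite Rabs_pos_eq; [field; lra|].
      apply Rlt_le; repeat apply Rdiv_lt_0_compat; try apply Rmult_lt_0_compat; lra.
    + replace (Finite t) with (Rbar_mult t (Rbar_inv (1 - q * 0))) by (simpl; f_equal; field).
      apply is_lim_seq_scal_l, is_lim_seq_inv; [|simpl; intro H; injection H; lra].
      apply is_lim_seq_minus'; [apply is_lim_seq_const|].
      apply is_lim_seq_mult'; [apply is_lim_seq_const|].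
      apply is_lim_seq_geom. rewrite Rabs_pos_eq; lra.
Qed.

Lemma is_series_euler q t : 0 < q < 1 -> 0 < t < 1 ->
  is_series (fun j => t ^ j / qpoch q q j) (euler q t).
Proof. intros Hq Ht. apply Series_correct, ex_series_euler; assumption. Qed.

Lemma euler_split q t : 0 < q < 1 -> 0 < t < 1 ->
  euler q t = 1 + Series (fun k => t ^ S k / qpoch q q (S k)).
Proof.
  intros Hq Ht. unfold euler. rewrite Series_incr_1 by (apply ex_series_euler; assumption).
  simpl. field.
Qed.

Lemma ex_series_euler_tail q t : 0 < q < 1 -> 0 < t < 1 ->
  ex_series (fun k => t ^ S k / qpoch q q (S k)).
Proof.
  intros Hq Ht. apply (ex_series_incr_1 (fun j => t ^ j / qpoch q q j)).
  apply ex_series_euler; assumption.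
Qed.

Lemma euler_mul_q q t : 0 < q < 1 -> 0 < t < 1 -> euler q (q * t) = (1 - t) * euler q t.
Proof.
  intros Hq Ht. apply is_series_unique.
  assert (Htail : is_series (fun k => t ^ S k / qpoch q q (S k)) (euler q t - 1)).
  { rewrite (euler_split q t Hq Ht).
    replace (1 + _ - 1) with (Series (fun k => t ^ S k / qpoch q q (S k))) by ring.
    apply Series_correct, ex_series_euler_tail; assumption. }
  assert (H := is_series_Rplus _ _ _ _ Htail
                 (is_series_Rscal _ (- t) _ (is_series_euler q t Hq Ht))).
  apply is_series_decr_1. unfold plus, opp; simpl.
  replace ((1 - t) * euler q t + - (1 / 1)) with (euler q t - 1 + - t * euler q t) by field.
  refine (is_series_Rext _ _ _ _ H). intros n. simpl.
  assert (0 < qpoch q q n) by (apply qpoch_qq_pos, Hq).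
  assert (q * q ^ n < 1) by (rewrite tech_pow_Rmult; apply pow_lt_1_compat; lra || lia).
  rewrite Rpow_mult_distr. field. lra.
Qed.

Lemma euler_ge_1 q t : 0 < q < 1 -> 0 < t < 1 -> 1 <= euler q t.
Proof.
  intros Hq Ht. rewrite euler_split by assumption.
  enough (0 <= Series (fun k => t ^ S k / qpoch q q (S k))) by lra.
  apply Series_nonneg; [|apply ex_series_euler_tail; assumption].
  intros n. apply Rlt_le, Rdiv_lt_0_compat; [apply pow_lt; lra | apply qpoch_qq_pos, Hq].
Qed.

Lemma euler_sub_1_le q u t : 0 < q < 1 -> 0 < u <= t -> t < 1 ->
  euler q u - 1 <= u / t * (euler q t - 1).
Proof.
  intros Hq Hu Ht.
  rewrite (euler_split q u), (euler_split q t) by (auto; lra).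
  replace (1 + _ - 1) with (Series (fun k => u ^ S k / qpoch q q (S k))) by ring.
  replace (u / t * _) with (Series (fun k => u / t * (t ^ S k / qpoch q q (S k))))
    by (rewrite Series_scal_l; ring).
  apply Series_le.
  - intros n.
    assert (0 < qpoch q q (S n)) by (apply qpoch_qq_pos, Hq).
    assert (0 < u ^ n) by (apply pow_lt; lra).
    assert (u ^ n <= t ^ n) by (apply pow_incr; lra).
    split; [apply Rlt_le, Rdiv_lt_0_compat; simpl; auto; apply Rmult_lt_0_compat; lra|].
    replace (u / t * (t ^ S n / qpoch q q (S n))) with (u * t ^ n / qpoch q q (S n))
      by (rewrite <- (tech_pow_Rmult t n); field; lra).
    simpl. apply Rmult_le_compat_r; [apply Rlt_le, Rinv_0_lt_compat; auto|].
    apply Rmult_le_compat_l; lra.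
  - destruct (ex_series_euler_tail q t Hq ltac:(lra)) as [l Hl].
    exists (u / t * l). apply is_series_Rscal, Hl.
Qed.

Lemma qpoch_mul_euler q t n : 0 < q < 1 -> 0 < t < 1 ->
  qpoch t q n * euler q t = euler q (t * q ^ n).
Proof.
  intros Hq Ht. induction n as [|n IH]; [simpl; rewrite Rmult_1_r; ring|].
  assert (0 < t * q ^ n < 1).
  { assert (0 < q ^ n) by (apply pow_lt; lra).
    assert (q ^ n <= 1) by (apply pow_le_1; lra). split; nra. }
  simpl. replace (t * (q * q ^ n)) with (q * (t * q ^ n)) by ring.
  rewrite euler_mul_q, <- IH by assumption. ring.
Qed.

(* Squeeze [1 <= e_q(t q^n) <= 1 + q^n (e_q(t) - 1)], so [(t;q)_n = e_q(t q^n) / e_q(t)]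
   tends to [1 / e_q(t)]. *)
Lemma qpoch_inf_euler q t : 0 < q < 1 -> 0 < t < 1 -> qpoch_inf t q = / euler q t.
Proof.
  intros Hq Ht. unfold qpoch_inf.
  assert (HE := euler_ge_1 q t Hq Ht).
  assert (Htn : forall n, 0 < t * q ^ n <= t).
  { intros n. assert (0 < q ^ n) by (apply pow_lt; lra).
    assert (q ^ n <= 1) by (apply pow_le_1; lra). split; nra. }
  assert (Hlim : is_lim_seq (fun n => euler q (t * q ^ n)) 1).
  { apply is_lim_seq_le_le with (u := fun _ => 1) (w := fun n => 1 + q ^ n * (euler q t - 1)).
    - intros n. specialize (Htn n). split; [apply euler_ge_1; auto; lra|].
      assert (Hb := euler_sub_1_le q (t * q ^ n) t Hq Htn (proj2 Ht)).
      replace (t * q ^ n / t) with (q ^ n) in Hb by (field; lra). lra.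
    - apply is_lim_seq_const.
    - replace (Finite 1) with (Finite (1 + 0 * (euler q t - 1))) by (f_equal; ring).
      apply is_lim_seq_plus'; [apply is_lim_seq_const|].
      apply is_lim_seq_mult'; [|apply is_lim_seq_const].
      apply is_lim_seq_geom. rewrite Rabs_pos_eq; lra. }
  assert (Hqpoch : is_lim_seq (fun n => qpoch t q n) (/ euler q t)).
  { apply is_lim_seq_ext with (fun n => euler q (t * q ^ n) * / euler q t).
    - intros n. rewrite <- (qpoch_mul_euler q t n Hq Ht). field. lra.
    - replace (Finite (/ euler q t)) with (Finite (1 * / euler q t)) by (f_equal; ring).
      apply is_lim_seq_mult'; [exact Hlim | apply is_lim_seq_const]. }
  rewrite (is_lim_seq_unique _ _ Hqpoch). reflexivity.
Qed.

(* [rothe_coef q n i = (-1)^i q^(i(i-1)/2) [n choose i]_q], obtained by multiplying out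
   [(v;q)_n] one factor at a time. *)
Fixpoint rothe_coef (q : R) (n i : nat) : R :=
  match n, i with
  | O, O => 1
  | O, S _ => 0
  | S n', O => rothe_coef q n' O
  | S n', S i' => rothe_coef q n' (S i') - q ^ n' * rothe_coef q n' i'
  end.

Lemma rothe_coef_0 q n : rothe_coef q n 0 = 1.
Proof. induction n; simpl; auto. Qed.

Lemma rothe_coef_gt q n i : (n < i)%nat -> rothe_coef q n i = 0.
Proof.
  revert i; induction n as [|n IH]; intros [|i] Hi; try lia; simpl; [reflexivity|].
  rewrite (IH (S i)), (IH i) by lia. ring.
Qed.

Lemma qpoch_rothe q v n : qpoch v q n = sum_f_R0 (fun i => rothe_coef q n i * v ^ i) n.
Proof.
  induction n as [|n IH]; [simpl; ring|].
  rewrite sum_f_R0_succ_l, rothe_coef_0. simpl qpoch. rewrite IH.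
  transitivity (sum_f_R0 (fun i => rothe_coef q n i * v ^ i) (S n)
                - q ^ n * v * sum_f_R0 (fun i => rothe_coef q n i * v ^ i) n).
  - rewrite tech5, (rothe_coef_gt q n (S n)) by lia. ring.
  - rewrite sum_f_R0_succ_l, rothe_coef_0, scal_sum.
    simpl rothe_coef.
    rewrite (sum_eq (fun i => (rothe_coef q n (S i) - q ^ n * rothe_coef q n i) * v ^ S i)
               (fun i => rothe_coef q n (S i) * v ^ S i - rothe_coef q n i * v ^ i * (q ^ n * v)))
      by (intros i _; simpl; ring).
    rewrite minus_sum. ring.
Qed.

Lemma rothe_coef_qpoch q m k : 0 < q ->
  rothe_coef q m k * qpoch q q k = qpoch (/ q ^ m) q k * (q ^ m) ^ k.
Proof.
  intros Hq. revert k; induction m as [|m IH]; intros [|k].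
  - simpl; ring.
  - rewrite (qpoch_succ_l (/ q ^ 0)). simpl. rewrite Rinv_1. ring.
  - simpl. rewrite rothe_coef_0. ring.
  - assert (0 < q ^ m) by (apply pow_lt; lra).
    transitivity (rothe_coef q m (S k) * qpoch q q (S k)
                  - q ^ m * (rothe_coef q m k * qpoch q q k) * (1 - q * q ^ k)); [simpl; ring|].
    rewrite !IH, (qpoch_succ_l (/ q ^ S m)).
    replace (/ q ^ S m * q) with (/ q ^ m) by (simpl; field; lra).
    simpl. rewrite Rpow_mult_distr. field. lra.
Qed.

Lemma rothe_coef_diag q n : rothe_coef q (S n) (S n) = - q ^ n * rothe_coef q n n.
Proof. simpl. rewrite (rothe_coef_gt q n (S n)) by lia. ring. Qed.

Lemma rothe_coef_subdiag q n : 0 < q < 1 ->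
  rothe_coef q (S n) n * q ^ n = - qnum q (S n) * rothe_coef q (S n) (S n).
Proof.
  intros Hq. unfold qnum. induction n as [|n IH]; [simpl; field; lra|].
  change (rothe_coef q (S (S n)) (S n))
    with (rothe_coef q (S n) (S n) - q ^ S n * rothe_coef q (S n) n).
  rewrite (rothe_coef_diag q (S n)). rewrite (rothe_coef_diag q n) in *.
  replace ((- q ^ n * rothe_coef q n n - q ^ S n * rothe_coef q (S n) n) * q ^ S n)
    with (- q ^ n * rothe_coef q n n * q ^ S n - q * q * (rothe_coef q (S n) n * q ^ n) * q ^ n)
    by (simpl; ring).
  rewrite IH. simpl. field. lra.
Qed.

Lemma rothe_coef_top q n : rothe_coef q n n = (-1) ^ n * q ^ binom2 n.
Proof.
  induction n as [|n IH]; [simpl; ring|].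
  rewrite rothe_coef_diag, IH, binom2_succ, pow_add. simpl. ring.
Qed.

Lemma qpoch_shift_ge q r j : 0 < q < 1 -> (r <= j)%nat ->
  qpoch (q ^ j * q / q ^ r) q r * qpoch q q (j - r) = qpoch q q j.
Proof.
  intros Hq Hrj. assert (0 < q ^ r) by (apply pow_lt; lra).
  replace j with ((j - r) + r)%nat at 1 3 by lia.
  rewrite qpoch_add, Rmult_comm, pow_add. do 2 f_equal. field. lra.
Qed.

Lemma qpoch_shift_lt q r j : 0 < q < 1 -> (j < r)%nat ->
  qpoch (q ^ j * q / q ^ r) q r = 0.
Proof.
  intros Hq Hjr. apply (qpoch_eq_0 _ _ _ (r - S j)); [lia|].
  assert (0 < q ^ j) by (apply pow_lt; lra).
  assert (0 < q ^ (r - S j)) by (apply pow_lt; lra).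
  replace r with (S j + (r - S j))%nat at 1 by lia.
  rewrite pow_add. simpl. field. lra.
Qed.

Lemma is_series_qpoch_shift_euler q r t : 0 < q < 1 -> 0 < t < 1 ->
  is_series (fun j => qpoch (q ^ j * q / q ^ r) q r * t ^ j / qpoch q q j) (t ^ r * euler q t).
Proof.
  intros Hq Ht. destruct r as [|r].
  - simpl. rewrite Rmult_1_l.
    refine (is_series_Rext _ _ _ _ (is_series_euler q t Hq Ht)). intros n. unfold Rdiv. ring.
  - apply (is_series_decr_n _ (S r)); [lia|].
    rewrite sum_n_Reals, sum_eq_R0
      by (intros i Hi; rewrite qpoch_shift_lt by (auto; simpl in Hi; lia); unfold Rdiv; ring).
    replace (plus _ (opp 0)) with (t ^ S r * euler q t)
      by (unfold plus, opp; simpl; ring).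
    refine (is_series_Rext _ _ _ _ (is_series_Rscal _ (t ^ S r) _ (is_series_euler q t Hq Ht))).
    intros n.
    assert (H1 := qpoch_shift_ge q (S r) (S r + n) Hq ltac:(lia)).
    replace (S r + n - S r)%nat with n in H1 by lia.
    set (P := qpoch (q ^ (S r + n) * q / q ^ S r) q (S r)) in *.
    assert (Hn := qpoch_qq_pos q n Hq).
    assert (HP : P <> 0)
      by (intro Hz; rewrite Hz in H1; apply (qpoch_qq_neq0 q (S r + n) Hq); lra).
    rewrite <- H1, pow_add. field. split; lra.
Qed.

Definition wall_coef q m x k := qpoch (/ q ^ m) q k * (q * x) ^ k / qpoch q q k.

Definition wall_factor q m k y := qpoch (y * q ^ S k / q ^ m) q (m - k).

(* A polynomial of degree [m] in [y] whose value at [y = q^j] is, up to an explicit factor,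
   the Wall-polynomial bracket of [p_j], in both regimes [m <= j] and [j < m]. *)
Definition wall_fun q m x y := sum_f_R0 (fun k => wall_coef q m x k * wall_factor q m k y) m.

Definition wall_gen q m x t := sum_f_R0 (fun k => wall_coef q m x k * t ^ (m - k)) m.

Lemma wall_factor_qpow q m k j : 0 < q -> (k <= m)%nat ->
  wall_factor q m k (q ^ j) = qpoch (q ^ j * q / q ^ (m - k)) q (m - k).
Proof.
  intros Hq Hk. unfold wall_factor. f_equal.
  replace m with (k + (m - k))%nat at 1 by lia. rewrite pow_add. simpl.
  field. split; apply pow_nonzero; lra.
Qed.

Lemma is_series_wall_fun_euler q m x t : 0 < q < 1 -> 0 < t < 1 ->
  is_series (fun j => wall_fun q m x (q ^ j) * t ^ j / qpoch q q j)
    (wall_gen q m x t * euler q t).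
Proof.
  intros Hq Ht.
  assert (H := is_series_sum_f_R0
     (fun k j => wall_coef q m x k
                 * (qpoch (q ^ j * q / q ^ (m - k)) q (m - k) * t ^ j / qpoch q q j))
     (fun k => wall_coef q m x k * (t ^ (m - k) * euler q t)) m
     (fun k _ => is_series_Rscal _ _ _ (is_series_qpoch_shift_euler q (m - k) t Hq Ht))).
  replace (wall_gen q m x t * euler q t)
    with (sum_f_R0 (fun k => wall_coef q m x k * (t ^ (m - k) * euler q t)) m)
    by (unfold wall_gen; rewrite Rmult_comm, scal_sum; apply sum_eq; intros; ring).
  refine (is_series_Rext _ _ _ _ H). intros j.
  transitivity (t ^ j / qpoch q q j * wall_fun q m x (q ^ j)); [|unfold Rdiv; ring].
  unfold wall_fun. rewrite scal_sum. apply sum_eq. intros k Hk.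
  rewrite wall_factor_qpow by (lra || lia). unfold Rdiv. ring.
Qed.

Lemma wall_coef_rothe q m x k : 0 < q < 1 ->
  wall_coef q m x k = rothe_coef q m k * (q * x / q ^ m) ^ k.
Proof.
  intros Hq. unfold wall_coef.
  assert (H := rothe_coef_qpoch q m k (proj1 Hq)).
  assert (Hk := qpoch_qq_neq0 q k Hq).
  assert (0 < q ^ m) by (apply pow_lt; lra).
  assert ((q ^ m) ^ k <> 0) by (apply pow_nonzero; lra).
  rewrite pow_div by lra.
  replace (qpoch (/ q ^ m) q k) with (rothe_coef q m k * qpoch q q k / (q ^ m) ^ k)
    by (rewrite H; field; auto).
  field. auto.
Qed.

Lemma wall_gen_closed q m x t : 0 < q < 1 -> t <> 0 ->
  wall_gen q m x t = t ^ m * qpoch (q * x / (q ^ m * t)) q m.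
Proof.
  intros Hq Ht. unfold wall_gen. rewrite qpoch_rothe, scal_sum. apply sum_eq. intros k Hk.
  rewrite wall_coef_rothe by assumption.
  assert (0 < q ^ m) by (apply pow_lt; lra).
  assert ((q ^ m) ^ k <> 0) by (apply pow_nonzero; lra).
  assert (t ^ k <> 0) by (apply pow_nonzero; lra).
  replace (t ^ m) with (t ^ (m - k) * t ^ k) by (rewrite <- pow_add; f_equal; lia).
  rewrite !pow_div by (try apply Rmult_integral_contrapositive; try split; lra).
  rewrite !Rpow_mult_distr. field. auto.
Qed.

Definition wall_fun_coef q m x i :=
  sum_f_R0 (fun k => wall_coef q m x k * (rothe_coef q (m - k) i * (q ^ S k / q ^ m) ^ i)) m.

Lemma wall_fun_poly q m x y :
  wall_fun q m x y = sum_f_R0 (fun i => wall_fun_coef q m x i * y ^ i) m.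
Proof.
  unfold wall_fun, wall_fun_coef.
  transitivity (sum_f_R0 (fun k => sum_f_R0 (fun i => wall_coef q m x k
      * (rothe_coef q (m - k) i * (q ^ S k / q ^ m) ^ i) * y ^ i) m) m).
  - apply sum_eq. intros k Hk. unfold wall_factor. rewrite qpoch_rothe.
    rewrite (sum_f_R0_pad _ (m - k) k) by (intros i Hi; rewrite rothe_coef_gt by lia; ring).
    replace (m - k + k)%nat with m by lia.
    rewrite scal_sum. apply sum_eq. intros i _.
    unfold Rdiv. rewrite !Rpow_mult_distr. ring.
  - rewrite sum_f_R0_swap. apply sum_eq. intros i _.
    rewrite Rmult_comm, scal_sum. apply sum_eq. intros; ring.
Qed.

(* The series [sum_j wall_fun (q^j) t^j / (q;q)_j] at [t = s q^n]. *)
Definition wall_euler q m x s n := wall_gen q m x (s * q ^ n) * euler q (s * q ^ n).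

Lemma is_series_wall_moment q m x s p : 0 < q < 1 -> 0 < s < 1 ->
  is_series (fun j => (q ^ p) ^ j * wall_fun q m x (q ^ j) ^ 2 * s ^ j / qpoch q q j)
    (sum_f_R0 (fun i => wall_fun_coef q m x i * wall_euler q m x s (p + i)) m).
Proof.
  intros Hq Hs.
  refine (is_series_Rext _ _ _ _ (is_series_sum_f_R0
     (fun i j => wall_fun_coef q m x i
                 * (wall_fun q m x (q ^ j) * (s * q ^ (p + i)) ^ j / qpoch q q j))
     _ m _)).
  - intros j. symmetry.
    transitivity (wall_fun q m x (q ^ j) * s ^ j * (q ^ p) ^ j / qpoch q q j
                  * sum_f_R0 (fun i => wall_fun_coef q m x i * (q ^ j) ^ i) m);
      [rewrite <- wall_fun_poly; unfold Rdiv; ring|].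
    rewrite scal_sum. apply sum_eq. intros i _.
    rewrite !Rpow_mult_distr, pow_add, Rpow_mult_distr, <- !pow_mult, (Nat.mul_comm i j).
    unfold Rdiv. ring.
  - intros i Hi. apply is_series_Rscal, is_series_wall_fun_euler; [exact Hq|].
    assert (0 < q ^ (p + i) <= 1) by (split; [apply pow_lt; lra | apply pow_le_1; lra]).
    split; nra.
Qed.

Lemma scaled_qpow_bounds q m x n : 0 < q < 1 -> 0 < x < q ^ m -> 0 < x / q ^ m * q ^ n < 1.
Proof.
  intros Hq Hx. assert (0 < q ^ m) by (apply pow_lt; lra).
  assert (0 < q ^ n <= 1) by (split; [apply pow_lt; lra | apply pow_le_1; lra]).
  assert (x / q ^ m < 1) by (apply (Rmult_lt_reg_r (q ^ m)); auto; field_simplify; lra).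
  assert (0 < x / q ^ m) by (apply Rdiv_lt_0_compat; lra).
  split; nra.
Qed.

Lemma scaled_bounds q m x : 0 < q < 1 -> 0 < x < q ^ m -> 0 < x / q ^ m < 1.
Proof.
  intros Hq Hx. rewrite <- (Rmult_1_r (x / q ^ m)). exact (scaled_qpow_bounds q m x 0 Hq Hx).
Qed.

Lemma qpoch_scaled_pos q m x : 0 < q < 1 -> 0 < x < q ^ m -> 0 < qpoch (q * x / q ^ m) q m.
Proof.
  intros Hq Hx. apply qpoch_pos. intros i _.
  assert (H := scaled_qpow_bounds q m x (S i) Hq Hx). simpl in H.
  replace (q * x / q ^ m * q ^ i) with (x / q ^ m * (q * q ^ i))
    by (field; apply pow_nonzero; lra).
  lra.
Qed.

Lemma wall_gen_at q m x n : 0 < q < 1 -> 0 < x ->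
  wall_gen q m x (x / q ^ m * q ^ n) = (x / q ^ m * q ^ n) ^ m * qpoch (q / q ^ n) q m.
Proof.
  intros Hq Hx.
  assert (0 < q ^ m) by (apply pow_lt; lra). assert (0 < q ^ n) by (apply pow_lt; lra).
  rewrite wall_gen_closed; [f_equal; f_equal; field; repeat split; lra | exact Hq |].
  apply Rgt_not_eq, Rmult_lt_0_compat; [apply Rdiv_lt_0_compat|]; assumption.
Qed.

Lemma wall_gen_vanish q m x n : 0 < q < 1 -> 0 < x -> (1 <= n <= m)%nat ->
  wall_gen q m x (x / q ^ m * q ^ n) = 0.
Proof.
  intros Hq Hx Hn. rewrite wall_gen_at by assumption.
  rewrite (qpoch_eq_0 _ _ _ (n - 1)); [ring | lia |].
  replace n with (S (n - 1)) at 1 by lia. simpl.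
  field. split; [apply pow_nonzero|]; lra.
Qed.

Lemma wall_coef_0 q m x : wall_coef q m x 0 = 1.
Proof. unfold wall_coef. simpl. field. Qed.

Lemma wall_fun_coef_0 q m x : 0 < q < 1 -> 0 < x ->
  wall_fun_coef q m x 0 = qpoch (q * x / q ^ m) q m.
Proof.
  intros Hq Hx. transitivity (wall_gen q m x 1).
  - unfold wall_fun_coef, wall_gen. apply sum_eq. intros k _.
    rewrite rothe_coef_0, pow1. simpl. ring.
  - rewrite wall_gen_closed by (auto; lra). rewrite pow1, !Rmult_1_r, Rmult_1_l. reflexivity.
Qed.

Lemma wall_fun_coef_top q m x :
  wall_fun_coef q m x m = rothe_coef q m m * (q / q ^ m) ^ m.
Proof.
  unfold wall_fun_coef. rewrite sum_f_R0_first.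
  - rewrite wall_coef_0, Nat.sub_0_r, pow_1. ring.
  - intros i Hi. rewrite rothe_coef_gt by lia. ring.
Qed.

Lemma wall_fun_coef_subtop q m x :
  wall_fun_coef q (S m) x m = rothe_coef q (S m) m * (q / q ^ S m) ^ m
    + wall_coef q (S m) x 1 * rothe_coef q m m * (q ^ 2 / q ^ S m) ^ m.
Proof.
  unfold wall_fun_coef. rewrite sum_f_R0_succ_l, sum_f_R0_first.
  - rewrite wall_coef_0, Nat.sub_0_r, pow_1. replace (S m - 1)%nat with m by lia. ring.
  - intros i Hi. rewrite rothe_coef_gt by lia. ring.
Qed.

Lemma wall_fun_coef_subtop_top q m x : 0 < q < 1 ->
  wall_fun_coef q (S m) x m = - (1 - x) * qnum q (S m) * wall_fun_coef q (S m) x (S m).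
Proof.
  intros Hq. rewrite wall_fun_coef_subtop, wall_fun_coef_top.
  assert (Hqm : q ^ m <> 0) by (apply pow_nonzero; lra).
  assert (Hsub : rothe_coef q (S m) m = qnum q (S m) * rothe_coef q m m).
  { apply (Rmult_eq_reg_r (q ^ m)); [|exact Hqm].
    rewrite rothe_coef_subdiag, rothe_coef_diag by exact Hq. ring. }
  rewrite Hsub, rothe_coef_diag.
  unfold wall_coef. simpl qpoch.
  replace (q / q ^ S m) with (/ q ^ m) by (simpl; field; split; auto; lra).
  replace (q ^ 2 / q ^ S m) with (q * / q ^ m) by (simpl; field; split; auto; lra).
  rewrite (Rpow_mult_distr q (/ q ^ m) m). change ((/ q ^ m) ^ S m) with (/ q ^ m * (/ q ^ m) ^ m).
  assert ((/ q ^ m) ^ m <> 0) by (apply pow_nonzero, Rinv_neq_0_compat, Hqm).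
  unfold qnum. simpl. field. repeat split; auto; lra.
Qed.

Definition wall_moment q m x p j :=
  (q ^ p) ^ j * wall_fun q m x (q ^ j) ^ 2 * (x / q ^ m) ^ j / qpoch q q j.

Definition wall_mass q m x := wall_fun_coef q m x 0 * wall_euler q m x (x / q ^ m) 0.

Section WallMoments.

Variables (q : R) (m : nat) (x : R).
Hypothesis Hq : 0 < q < 1.
Hypothesis Hx : 0 < x < q ^ m.

Lemma wall_euler_0 :
  wall_euler q m x (x / q ^ m) 0 = (x / q ^ m) ^ m * qpoch q q m * euler q (x / q ^ m).
Proof.
  unfold wall_euler. rewrite wall_gen_at by (auto; lra).
  rewrite pow_O, !Rmult_1_r. unfold Rdiv at 2. rewrite Rinv_1, Rmult_1_r. reflexivity.
Qed.

Lemma wall_fun_coef_top_euler :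
  wall_fun_coef q m x m * wall_euler q m x (x / q ^ m) (1 + m)
  = (q ^ m - x) * wall_mass q m x.
Proof.
  unfold wall_mass. rewrite wall_euler_0, wall_fun_coef_top, wall_fun_coef_0 by (auto; lra).
  unfold wall_euler. change (1 + m)%nat with (S m).
  rewrite wall_gen_at, <- qpoch_mul_euler, qpoch_succ_l
    by (auto; try lra; apply scaled_bounds; auto).
  assert (0 < q ^ m) by (apply pow_lt; lra).
  replace (q / q ^ S m) with (/ q ^ m) by (simpl; field; lra).
  replace (x / q ^ m * q) with (q * x / q ^ m) by (field; lra).
  rewrite rothe_coef_top, qpoch_inv_pow by exact Hq.
  rewrite !Rpow_mult_distr. repeat rewrite pow_div by lra. rewrite <- !pow_mult.
  replace (m * m)%nat with (binom2 m + binom2 m + m)%nat by (pose proof (binom2_double m); lia).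
  replace (S m * m)%nat with (binom2 m + binom2 m + m + m)%nat
    by (pose proof (binom2_double m); lia).
  rewrite !pow_add.
  assert (q ^ binom2 m <> 0) by (apply pow_nonzero; lra).
  assert (x ^ m <> 0) by (apply pow_nonzero; lra).
  destruct (pow_neg1_cases m) as [Hs | Hs]; rewrite Hs; field; repeat split; lra.
Qed.

Lemma wall_euler_succ_top :
  wall_euler q m x (x / q ^ m) (2 + m)
  = (1 - x * q) * qnum q (S m) * wall_euler q m x (x / q ^ m) (1 + m).
Proof.
  assert (0 < q ^ m) by (apply pow_lt; lra).
  assert (q ^ m <= 1) by (apply pow_le_1; lra).
  unfold wall_euler. repeat rewrite wall_gen_at by (auto; lra).
  replace (x / q ^ m * q ^ (2 + m)) with (q * (x * q)) by (simpl; field; lra).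
  replace (x / q ^ m * q ^ (1 + m)) with (x * q) by (simpl; field; lra).
  replace (q / q ^ (2 + m)) with (/ q ^ S m) by (simpl; field; lra).
  replace (q / q ^ (1 + m)) with (/ q ^ m) by (simpl; field; lra).
  rewrite euler_mul_q by (auto; split; nra).
  rewrite Rpow_mult_distr.
  transitivity ((1 - x * q) * (q ^ m * qpoch (/ q ^ S m) q m) * (x * q) ^ m * euler q (x * q));
    [ring|].
  rewrite qpoch_inv_pow_succ by exact Hq. ring.
Qed.

Lemma is_series_wall_moment0 :
  is_series (wall_moment q m x 0) (wall_mass q m x).
Proof.
  assert (H := is_series_wall_moment q m x (x / q ^ m) 0 Hq (scaled_bounds q m x Hq Hx)).
  rewrite sum_f_R0_first in H; [exact H|].
  intros i Hi. unfold wall_euler. rewrite wall_gen_vanish by (auto; lra || lia). ring.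
Qed.

Lemma is_series_wall_moment1 :
  is_series (wall_moment q m x 1) ((q ^ m - x) * wall_mass q m x).
Proof.
  assert (H := is_series_wall_moment q m x (x / q ^ m) 1 Hq (scaled_bounds q m x Hq Hx)).
  rewrite sum_f_R0_last, wall_fun_coef_top_euler in H; [exact H|].
  intros i Hi. unfold wall_euler. rewrite wall_gen_vanish by (auto; lra || lia). ring.
Qed.

Lemma is_series_wall_moment2 :
  is_series (wall_moment q m x 2)
    (((1 - x * q) * qnum q (S m) - (1 - x) * qnum q m) * (q ^ m - x) * wall_mass q m x).
Proof.
  assert (H := is_series_wall_moment q m x (x / q ^ m) 2 Hq (scaled_bounds q m x Hq Hx)).
  rewrite Rmult_assoc, <- wall_fun_coef_top_euler.
  destruct (Nat.eq_dec m 0) as [Hm | Hm].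
  - rewrite sum_f_R0_last, wall_euler_succ_top in H by lia.
    replace (qnum q m) with 0 by (rewrite Hm; unfold qnum; simpl; field; lra).
    refine (is_series_Rcongr _ _ _ _ H). ring.
  - rewrite sum_f_R0_last_two in H
      by (lia || (intros i Hi; unfold wall_euler;
                  rewrite wall_gen_vanish by (auto; lra || lia); ring)).
    assert (Hsub := wall_fun_coef_subtop_top q (m - 1) x Hq).
    replace (S (m - 1)) with m in Hsub by lia.
    replace (2 + (m - 1))%nat with (1 + m)%nat in H by lia.
    rewrite Hsub, wall_euler_succ_top in H.
    refine (is_series_Rcongr _ _ _ _ H). ring.
Qed.

End WallMoments.

Lemma wall_fun_ge q m x j : 0 < q < 1 -> (m <= j)%nat ->
  wall_fun q m x (q ^ j) = qpoch q q j / qpoch q q (j - m) * wall m x (q ^ (j - m)) q.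
Proof.
  intros Hq Hmj. set (d := (j - m)%nat). assert (Hj : j = (d + m)%nat) by (unfold d; lia).
  unfold wall, wall_fun. rewrite scal_sum. apply sum_eq. intros k Hk.
  unfold wall_coef, wall_factor.
  assert (E : qpoch q q j
              = qpoch q q d * qpoch (q * q ^ d) q k * qpoch (q ^ j * q ^ S k / q ^ m) q (m - k)).
  { rewrite Hj. replace (d + m)%nat with ((d + k) + (m - k))%nat at 1 by lia.
    rewrite !qpoch_add. do 2 f_equal.
    rewrite !pow_add.
    replace (q ^ m) with (q ^ k * q ^ (m - k)) by (rewrite <- pow_add; f_equal; lia).
    simpl. field. split; apply pow_nonzero; lra. }
  rewrite E, (Rmult_comm (q ^ d) q).
  assert (0 < qpoch (q * q ^ d) q k) by (apply qpoch_qpow_pos, Hq).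
  assert (qpoch q q d <> 0) by (apply qpoch_qq_neq0, Hq).
  assert (qpoch q q k <> 0) by (apply qpoch_qq_neq0, Hq).
  field. repeat split; lra.
Qed.

Lemma wall_fun_lt q m x j : 0 < q < 1 -> (j < m)%nat ->
  wall_fun q m x (q ^ j)
  = qpoch (/ q ^ m) q (m - j) * (q * x) ^ (m - j) * qpoch q q j / qpoch q q (m - j)
    * wall j x (q ^ (m - j)) q.
Proof.
  intros Hq Hjm. set (d := (m - j)%nat). assert (Hm : m = (d + j)%nat) by (unfold d; lia).
  assert (Hqm : 0 < q ^ m) by (apply pow_lt; lra).
  unfold wall_fun.
  transitivity (sum_f_R0 (fun k => wall_coef q m x k * wall_factor q m k (q ^ j)) (d + j));
    [rewrite <- Hm; reflexivity|].
  rewrite sum_f_R0_shift.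
  - unfold wall. rewrite scal_sum. apply sum_eq. intros k Hk.
    unfold wall_coef, wall_factor.
    assert (E1 : qpoch (/ q ^ m) q (d + k) = qpoch (/ q ^ m) q d * qpoch (/ q ^ j) q k).
    { rewrite qpoch_add. do 2 f_equal. rewrite Hm, pow_add. field. split; apply pow_nonzero; lra. }
    assert (E2 : qpoch q q (d + k) = qpoch q q d * qpoch (q * q ^ d) q k).
    { rewrite qpoch_add. do 2 f_equal. }
    assert (E3 : qpoch q q j
                 = qpoch q q k * qpoch (q ^ j * q ^ S (d + k) / q ^ m) q (m - (d + k))).
    { replace (m - (d + k))%nat with (j - k)%nat by lia.
      replace j with (k + (j - k))%nat at 1 by lia. rewrite qpoch_add. do 2 f_equal.
      rewrite Hm, !pow_add. simpl. rewrite !pow_add.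
      field. repeat split; apply pow_nonzero; lra. }
    rewrite E1, E2, E3, pow_add, (Rmult_comm (q ^ d) q).
    assert (0 < qpoch (q * q ^ d) q k) by (apply qpoch_qpow_pos, Hq).
    assert (qpoch q q d <> 0) by (apply qpoch_qq_neq0, Hq).
    assert (qpoch q q k <> 0) by (apply qpoch_qq_neq0, Hq).
    field. repeat split; lra.
  - intros k Hk. unfold wall_factor. rewrite (qpoch_eq_0 _ _ _ (d - 1 - k)); [ring | lia |].
    replace d with (S k + (d - 1 - k))%nat in Hm by lia.
    rewrite Hm, !pow_add.
    assert (q ^ S k <> 0) by (apply pow_nonzero; lra).
    assert (q ^ (d - 1 - k) <> 0) by (apply pow_nonzero; lra).
    assert (q ^ j <> 0) by (apply pow_nonzero; lra).
    field. repeat split; auto.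
Qed.

Lemma wall_bracket_lt q m x j : 0 < q < 1 -> 0 < x -> (j < m)%nat ->
  qpoch q q m / qpoch q q (m - j) * wall j x (q ^ (m - j)) q
  = (-1) ^ (m - j) * q ^ (m - j) * q ^ binom2 m / (q ^ binom2 j * (q * x) ^ (m - j))
    * wall_fun q m x (q ^ j).
Proof.
  intros Hq Hx Hjm. rewrite wall_fun_lt by assumption.
  set (d := (m - j)%nat). assert (Hm : m = (j + d)%nat) by (unfold d; lia).
  assert (HK := qpoch_inv_pow_reflect q j d Hq). rewrite <- Hm in HK.
  assert (q ^ d <> 0) by (apply pow_nonzero; lra).
  assert (q ^ binom2 m <> 0) by (apply pow_nonzero; lra).
  assert (q ^ binom2 j <> 0) by (apply pow_nonzero; lra).
  assert ((q * x) ^ d <> 0) by (apply pow_nonzero, Rmult_integral_contrapositive; split; lra).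
  assert (qpoch q q d <> 0) by (apply qpoch_qq_neq0, Hq).
  assert (qpoch q q j <> 0) by (apply qpoch_qq_neq0, Hq).
  replace (qpoch (/ q ^ m) q d)
    with ((-1) ^ d * q ^ binom2 j * qpoch q q m / (q ^ d * q ^ binom2 m * qpoch q q j))
    by (rewrite <- HK; field; repeat split; auto).
  destruct (pow_neg1_cases d) as [Hs | Hs]; rewrite Hs; field; repeat split; auto.
Qed.

Definition pj_scale q m lam :=
  q ^ (2 * binom2 m) / (Nqm q m lam * ((1 - q) * lam) ^ m * qpoch q q m).

Lemma pj_wall q m lam j : 0 < q < 1 -> 0 < lam -> Nqm q m lam <> 0 ->
  pj lam q m j = pj_scale q m lam * wall_moment q m ((1 - q) * lam) 0 j.
Proof.
  intros Hq Hl HN. unfold pj, pj_scale, wall_moment, absdiff. cbv zeta.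
  rewrite pow_O, pow1, Rmult_1_l, (Rmult_assoc (q ^ _)), <- Rpow_mult_distr.
  set (x := (1 - q) * lam).
  assert (Hx : 0 < x) by (unfold x; apply Rmult_lt_0_compat; lra).
  assert (Hqm : 0 < q ^ m) by (apply pow_lt; lra).
  assert (qpoch q q m <> 0) by (apply qpoch_qq_neq0, Hq).
  assert (qpoch q q j <> 0) by (apply qpoch_qq_neq0, Hq).
  assert (q ^ (m * j) <> 0) by (apply pow_nonzero; lra).
  rewrite pow_div, <- pow_mult by lra.
  destruct (Compare_dec.le_lt_dec m j) as [Hmj | Hjm].
  - rewrite Nat.max_r, Nat.min_l, <- wall_fun_ge by assumption.
    replace (x ^ j) with (x ^ (j - m) * x ^ m) by (rewrite <- pow_add; f_equal; lia).
    assert (x ^ (j - m) <> 0) by (apply pow_nonzero; lra).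
    assert (x ^ m <> 0) by (apply pow_nonzero; lra).
    field. repeat split; auto.
  - rewrite Nat.max_l, Nat.min_r, wall_bracket_lt by (auto; lia).
    set (d := (m - j)%nat).
    replace (x ^ m) with (x ^ j * x ^ d) by (unfold d; rewrite <- pow_add; f_equal; lia).
    replace (2 * binom2 m)%nat with (binom2 m + binom2 m)%nat by lia.
    replace (2 * binom2 j)%nat with (binom2 j + binom2 j)%nat by lia.
    rewrite !pow_add, !Rpow_mult_distr.
    assert (x ^ j <> 0) by (apply pow_nonzero; lra).
    assert (x ^ d <> 0) by (apply pow_nonzero; lra).
    assert (q ^ d <> 0) by (apply pow_nonzero; lra).
    assert (q ^ binom2 j <> 0) by (apply pow_nonzero; lra).
    destruct (pow_neg1_cases d) as [Hs | Hs]; rewrite Hs; field; repeat split; auto.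
Qed.

Section GeneralizedEuler.

Variables (q : R) (m : nat) (lam : R).
Hypothesis Hq : 0 < q < 1.
Hypothesis Hlam : 0 < lam < q ^ m / (1 - q).

Lemma scaled_lam_bounds : 0 < (1 - q) * lam < q ^ m.
Proof.
  split; [apply Rmult_lt_0_compat; lra|].
  replace (q ^ m) with ((1 - q) * (q ^ m / (1 - q))) by (field; lra).
  apply Rmult_lt_compat_l; lra.
Qed.

Lemma Nqm_euler : Nqm q m lam
  = qpoch (q * ((1 - q) * lam) / q ^ m) q m * euler q ((1 - q) * lam / q ^ m) / q ^ m.
Proof.
  assert (Hs := scaled_bounds q m _ Hq scaled_lam_bounds).
  assert (q ^ m <> 0) by (apply pow_nonzero; lra).
  assert (1 <= euler q ((1 - q) * lam / q ^ m)) by (apply euler_ge_1; assumption).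
  unfold Nqm.
  replace (/ q ^ m * (1 - q) * lam) with ((1 - q) * lam / q ^ m) by (field; auto).
  replace (q / q ^ m * (1 - q) * lam) with (q * ((1 - q) * lam) / q ^ m) by (field; auto).
  rewrite qpoch_inf_euler by assumption. field. split; [auto | lra].
Qed.

Lemma Nqm_pos : 0 < Nqm q m lam.
Proof.
  assert (Hx := scaled_lam_bounds).
  assert (1 <= euler q ((1 - q) * lam / q ^ m)) by (apply euler_ge_1, scaled_bounds; assumption).
  rewrite Nqm_euler. apply Rdiv_lt_0_compat; [apply Rmult_lt_0_compat | apply pow_lt]; try lra.
  apply qpoch_scaled_pos; assumption.
Qed.

Lemma pj_scale_normalize : pj_scale q m lam * wall_mass q m ((1 - q) * lam) = 1.
Proof.
  assert (Hx := scaled_lam_bounds).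
  assert (HN := Nqm_pos). rewrite Nqm_euler in HN.
  unfold pj_scale, wall_mass. rewrite Nqm_euler, wall_euler_0, wall_fun_coef_0 by (auto; lra).
  set (x := (1 - q) * lam) in *.
  assert (0 < qpoch (q * x / q ^ m) q m) by (apply qpoch_scaled_pos; assumption).
  assert (1 <= euler q (x / q ^ m)) by (apply euler_ge_1, scaled_bounds; assumption).
  assert (q ^ m <> 0) by (apply pow_nonzero; lra).
  assert (q ^ binom2 m <> 0) by (apply pow_nonzero; lra).
  assert (x ^ m <> 0) by (apply pow_nonzero; lra).
  assert (qpoch q q m <> 0) by (apply qpoch_qq_neq0, Hq).
  rewrite pow_div, <- pow_mult by assumption.
  replace (m * m)%nat with (binom2 m + binom2 m + m)%nat by (pose proof (binom2_double m); lia).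
  replace (2 * binom2 m)%nat with (binom2 m + binom2 m)%nat by lia.
  rewrite !pow_add. field. repeat split; auto; lra.
Qed.

Lemma pj_scale_mass_r a : pj_scale q m lam * (a * wall_mass q m ((1 - q) * lam)) = a.
Proof.
  transitivity (a * (pj_scale q m lam * wall_mass q m ((1 - q) * lam))); [ring|].
  rewrite pj_scale_normalize. ring.
Qed.

Lemma is_series_pj : is_series (pj lam q m) 1.
Proof.
  assert (HN := Nqm_pos).
  eapply is_series_Rcongr; [apply pj_scale_normalize|].
  refine (is_series_Rext _ _ _ _ (is_series_Rscal _ _ _
            (is_series_wall_moment0 q m _ Hq scaled_lam_bounds))).
  intros j. rewrite pj_wall by lra. reflexivity.
Qed.

Lemma is_series_qpow_pj :
  is_series (fun j => q ^ j * pj lam q m j) (q ^ m - (1 - q) * lam).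
Proof.
  assert (HN := Nqm_pos).
  assert (H := is_series_Rscal _ (pj_scale q m lam) _
                 (is_series_wall_moment1 q m _ Hq scaled_lam_bounds)).
  refine (is_series_Rcongr _ _ _ (pj_scale_mass_r _) (is_series_Rext _ _ _ _ H)).
  intros j. rewrite pj_wall by lra. unfold wall_moment.
  rewrite pow_O, pow1, pow_1. unfold Rdiv. ring.
Qed.

Lemma is_series_qpow2_pj :
  is_series (fun j => (q ^ j) ^ 2 * pj lam q m j)
    (((1 - (1 - q) * lam * q) * qnum q (S m) - (1 - (1 - q) * lam) * qnum q m)
     * (q ^ m - (1 - q) * lam)).
Proof.
  assert (HN := Nqm_pos).
  assert (H := is_series_Rscal _ (pj_scale q m lam) _
                 (is_series_wall_moment2 q m _ Hq scaled_lam_bounds)).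
  refine (is_series_Rcongr _ _ _ (pj_scale_mass_r _) (is_series_Rext _ _ _ _ H)).
  intros j. rewrite pj_wall by lra. unfold wall_moment.
  rewrite pow_O, pow1, <- !pow_mult, Nat.mul_comm. unfold Rdiv. ring.
Qed.

End GeneralizedEuler.

Theorem proposition5p1 (q : R) (m : nat) (lam : R) :
  0 < q < 1 ->
  0 < lam < q ^ m / (1 - q) ->
  is_series (fun j => qnum q j * pj lam q m j) (lam + qnum q m) /\
  is_series (fun j => (qnum q j - (lam + qnum q m)) ^ 2 * pj lam q m j)
    (lam ^ 2 * q ^ m * (1 + q - 2 / q ^ m)
     + lam * q ^ m * (2 * qnum q m + q ^ m)).
Proof.
  intros Hq Hlam.
  assert (Hqm : q ^ m <> 0) by (apply pow_nonzero; lra).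
  assert (H0 := is_series_pj q m lam Hq Hlam).
  assert (H1 := is_series_qpow_pj q m lam Hq Hlam).
  assert (H2 := is_series_qpow2_pj q m lam Hq Hlam).
  split.
  - refine (is_series_Rcongr _ _ _ _ (is_series_Rext _ _ _ _
              (is_series_quadratic _ _ _ _ _ (/ (1 - q)) (- / (1 - q)) 0 H0 H1 H2))).
    + unfold qnum. field. lra.
    + intros j. unfold qnum. field. lra.
  - set (c := / (1 - q) - (lam + qnum q m)).
    refine (is_series_Rcongr _ _ _ _ (is_series_Rext _ _ _ _
              (is_series_quadratic _ _ _ _ _ (c ^ 2) (- 2 * c / (1 - q)) (/ (1 - q) ^ 2)
                 H0 H1 H2))).
    + unfold c, qnum. simpl pow. field. lra.
    + intros j. unfold c, qnum. field. lra.
Qed.
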